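(* Let $(X,\mathrm{dist})$ be a distance space, $r_1<r_2$, and $\mathcal{H}$ an $(r_1,r_2,p_1,p_2)$-sensitive family of hash functions on $X$ with $0<p_1\le 1$. Let $k, L$ be positive integers, let $\varepsilon > 0$, and let $m$ be an integer with $m \ge \left\lceil \frac{1-p_1}{p_1}\cdot\frac{k}{\ln(1+\varepsilon)}\right\rceil$, $m\ge 1$. Let $h_{i,j}$ for $i\in[k]$, $j\in[m]$ be sampled independently from $\mathcal{H}$, and let $f_1,\dots,f_k\colon [L]\to[m]$ be pairwise independent hash functions, independent of each other and of the $h_{i,j}$. For $l\in[L]$ define $g_l(x) = (h_{1,f_1(l)}(x), \dots, h_{k,f_k(l)}(x))$. Then for every pair of points $x,y\in X$ with $\mathrm{dist}(x,y)\le r_1$, writing $p = \Pr_{h\sim\mathcal{H}}[h(x)=h(y)]$ and $\mu = L p^k$, we have $$\Pr[\nexists\, l\in[L] \colon g_l(x) = g_l(y)] \le \frac{1+\varepsilon\mu}{1+(1+\varepsilon)\mu}.$$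
   Context: Here $[n]=\{1,\dots,n\}$. A distribution $\mathcal{H}$ over functions $h\colon X \to R$ is $(r_1, r_2, p_1, p_2)$-sensitive if for all $x, y \in X$ and $h \sim \mathcal{H}$: if $\mathrm{dist}(x,y) \le r_1$ then $\Pr[h(x)=h(y)] \ge p_1$, and if $\mathrm{dist}(x,y) \ge r_2$ then $\Pr[h(x)=h(y)] \le p_2$. A family of functions $f\colon[L]\to[m]$ is pairwise independent if for distinct $l\neq l'$ the pair $(f(l),f(l'))$ is uniformly distributed on $[m]^2$. *)

From HB Require Import structures.
From mathcomp Require Import all_boot all_order all_algebra.
From mathcomp Require Import all_classical all_reals all_analysis.
Set Implicit Arguments. Unset Strict Implicit. Unset Printing Implicit Defensive.
Import Order.TTheory GRing.Theory Num.Theory.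
Local Open Scope classical_set_scope.
Local Open Scope ring_scope.

(* A distribution over hash functions X -> Rng is represented by a probability
   space (Om, P) together with a map H : Om -> (X -> Rng); h ~ H means h = H w
   with w ~ P.  Pr_{h ~ H}[h x = h y] = P [set w | H w x = H w y]. *)
Definition collision_prob {d} {Om : measurableType d} {R : realType} {X Rng : Type}
  (P : probability Om R) (H : Om -> X -> Rng) (x y : X) : R :=
  fine (P [set w | H w x = H w y]).

Definition sensitive {d} {Om : measurableType d} {R : realType} {X Rng : Type}
  (dist : X -> X -> R) (P : probability Om R) (H : Om -> X -> Rng)
  (r1 r2 p1 p2 : R) : Prop :=
  forall x y : X,
    (dist x y <= r1 -> p1 <= collision_prob P H x y) /\
    (r2 <= dist x y -> collision_prob P H x y <= p2).

Definition pairwise_indep {d} {Om' : measurableType d} {R : realType} (L m : nat)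
  (Q : probability Om' R) (f : Om' -> {ffun 'I_L -> 'I_m}) : Prop :=
  forall (l l' : 'I_L), l != l' -> forall a b : 'I_m,
    fine (Q [set w | f w l = a /\ f w l' = b]) = 1 / (m%:R ^+ 2).

Definition sampled_indep {d d'} {Om : measurableType d} {Om' : measurableType d'}
  {R : realType} (k m L : nat) (P : probability Om R) (Q : probability Om' R)
  (om : 'I_k -> 'I_m -> Om' -> Om) (ff : 'I_k -> Om' -> {ffun 'I_L -> 'I_m}) : Prop :=
  forall (A : 'I_k -> 'I_m -> set Om) (B : 'I_k -> {set {ffun 'I_L -> 'I_m}}),
    (forall i j, measurable (A i j)) ->
    fine (Q ((\bigcap_(i in [set: 'I_k]) \bigcap_(j in [set: 'I_m]) (om i j @^-1` A i j))
             `&` (\bigcap_(i in [set: 'I_k]) (ff i @^-1` [set g | g \in B i]))))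
    = (\prod_(i < k) \prod_(j < m) fine (P (A i j)))
      * \prod_(i < k) fine (Q (ff i @^-1` [set g | g \in B i])).

Definition gfun {d d'} {Om : measurableType d} {Om' : measurableType d'}
  {X Rng : Type} (k m L : nat) (H : Om -> X -> Rng)
  (om : 'I_k -> 'I_m -> Om' -> Om) (ff : 'I_k -> Om' -> {ffun 'I_L -> 'I_m})
  (l : 'I_L) (w : Om') (x : X) : {ffun 'I_k -> Rng} :=
  [ffun i => H (om i (ff i w l) w) x].

From HB Require Import structures.
From mathcomp Require Import all_boot all_order all_algebra.
From mathcomp Require Import all_classical all_reals all_analysis.
From mathcomp Require Import ring lra.
Import Order.TTheory GRing.Theory Num.Theory.
Local Open Scope classical_set_scope.
Local Open Scope ring_scope.

(* All events involved depend on an outcome only through its finite trace: for each row i, the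
   pattern of the h_{i,j} colliding on (x, y), and the function f_i.  By independence the law of
   the trace is a product over rows of Bernoulli(p) patterns times the law of f_i.  Let Z count
   the l with g_l(x) = g_l(y).  Then E Z = L p^k = mu, and for l <> l' pairwise independence
   makes both collide in a row with probability p^2 + (p - p^2)/m, which the choice of m keeps
   below (1 + eps)^(1/k) p^2; hence E Z^2 <= mu + (1 + eps) mu^2 = lam mu with
   lam = 1 + (1 + eps) mu.  The second moment method, E Z^2 <= lam E Z ==> P(Z <> 0) >= E Z / lam,
   bounds the failure probability by 1 - mu / lam. *)

Section finite_preimage.
Context {d} {T : measurableType d} {R : realType} {U : finType} {g : T -> U}.
Hypothesis mg : forall u, measurable (g @^-1` [set u]).

Lemma measure_preimage_sum (mu : {measure set T -> \bar R}) (S : {pred U}) :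
  mu (g @^-1` [set u | S u]) = (\sum_(u | S u) mu (g @^-1` [set u]))%E.
Proof.
have -> : g @^-1` [set u | S u] = \bigcup_(u in [set` S]) g @^-1` [set u].
  by apply/seteqP; split=> [w Sw|w [u Su] /= ->]; [exists (g w)|].
rewrite measure_fin_bigcup //; last exact: trivIset_preimage1.
rewrite -(bigfs _ (enum_uniq U)); last by move=> u _; rewrite mem_enum.
by rewrite big_enum_cond.
Qed.

Lemma finite_measure_preimage_sum (mu : {finite_measure set T -> \bar R}) (S : {pred U}) :
  mu (g @^-1` [set u | S u]) = (\sum_(u | S u) fine (mu (g @^-1` [set u])))%:E.
Proof.
rewrite measure_preimage_sum -sumEFin; apply: eq_bigr => u _.
by rewrite fineK // fin_num_measure.
Qed.

Lemma probability_preimage_sum1 (P : probability T R) :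
  \sum_u fine (P (g @^-1` [set u])) = 1.
Proof.
apply: EFin_inj; transitivity (P (g @^-1` [set u | predT u])).
  by rewrite finite_measure_preimage_sum.
have -> : [set u | predT u] = [set: U] by apply/seteqP.
by rewrite preimage_setT probability_setT.
Qed.

End finite_preimage.

Lemma natr_forall (R : idomainType) (I : finType) (b : I -> bool) :
  \prod_i ((b i)%:R : R) = [forall i, b i]%:R.
Proof.
have [/forallP bT|/forallPn [i /negbTE bi]] := boolP [forall i, b i].
  by rewrite big1 // => i _; rewrite bT.
by apply/eqP/prodf_eq0; exists i; rewrite ?bi.
Qed.

Definition bernoulli_weight {R : pzRingType} (p : R) (b : bool) : R :=
  if b then p else 1 - p.

Section product_weights.
Context {R : comNzRingType}.

Lemma sum_ffun_prodM (I U : finType) (rho F : I -> U -> R) :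
  \sum_(t : {ffun I -> U}) (\prod_i rho i (t i)) * \prod_i F i (t i)
  = \prod_i \sum_u rho i u * F i u.
Proof. by rewrite bigA_distr_bigA; apply: eq_bigr => t _; rewrite big_split. Qed.

Lemma sum_bernoulli_all (I : finType) (p : R) (S : {set I}) :
  \sum_(c : {ffun I -> bool})
     (\prod_j bernoulli_weight p (c j)) * \prod_(j in S) (c j)%:R = p ^+ #|S|.
Proof.
under eq_bigr do rewrite [X in _ * X]big_mkcond /=.
rewrite (@sum_ffun_prodM _ _ (fun=> bernoulli_weight p)
  (fun j (b : bool) => if j \in S then b%:R else 1)) -prodr_const [RHS]big_mkcond /=.
apply: eq_bigr => j _; rewrite big_bool /bernoulli_weight /=.
by case: (j \in S); rewrite ?mulr1 ?mulr0 ?addr0 // addrC subrK.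
Qed.

Lemma prod_set2_natr (I : finType) (c : I -> bool) (a b : I) :
  \prod_(j in [set a; b]%SET) ((c j)%:R : R) = (c a && c b)%:R.
Proof.
have [<-|neq_ab] := eqVneq a b; first by rewrite finset.setUid big_set1 andbb.
by rewrite big_setU1 ?inE // big_set1 /= -natrM mulnb.
Qed.

End product_weights.

Definition pair_collision_rate {R : numFieldType} (p : R) (m : nat) : R :=
  p ^+ 2 + (p - p ^+ 2) / m%:R.

Lemma sum_pairwise_uniform_pow (R : numFieldType) (L m : nat) (p : R)
    (pi : {ffun 'I_L -> 'I_m} -> R) (l l' : 'I_L) :
  (0 < m)%N -> \sum_f pi f = 1 ->
  (forall a, \sum_(f : {ffun 'I_L -> 'I_m} | (f l == a) && (f l' == a)) pi f = 1 / m%:R ^+ 2) ->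
  \sum_f pi f * p ^+ (f l != f l').+1 = pair_collision_rate p m.
Proof.
move=> m_gt0 pi1 pi_pair.
have collision : \sum_(f : {ffun 'I_L -> 'I_m} | f l == f l') pi f = m%:R^-1.
  rewrite (partition_big (fun f : {ffun 'I_L -> 'I_m} => f l) xpredT) //=.
  transitivity (\sum_(a < m) (1 / m%:R ^+ 2 : R)).
    apply: eq_bigr => a _; rewrite -(pi_pair a); apply: eq_bigl => f.
    by case: (eqVneq (f l) a) => [->|]; rewrite ?andbT ?andbF // eq_sym.
  by rewrite sumr_const card_ord -mulr_natr; field; rewrite pnatr_eq0 -lt0n.
transitivity (\sum_f (pi f * p ^+ 2 + (p - p ^+ 2) * (if f l == f l' then pi f else 0))).
  by apply: eq_bigr => f _; case: eqP => _; rewrite /= ?mulr0 ?addr0 //; ring.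
rewrite big_split /= -mulr_suml pi1 mul1r -mulr_sumr.
by rewrite -big_mkcond collision.
Qed.

Lemma second_moment_lower {R : realFieldType} {T : finType} {q Z : T -> R} {lam : R} :
  (forall t, 0 <= q t) -> 0 < lam ->
  \sum_t q t * Z t ^+ 2 <= lam * \sum_t q t * Z t ->
  \sum_t q t * Z t <= lam * \sum_(t | Z t != 0) q t.
Proof.
move=> q_ge0 lam_gt0 EZ2_le.
(* Off the zero set of Z the summand below is q (Z - lam)^2. *)
have pointwise t :
    0 <= q t * Z t ^+ 2 - 2 * lam * (q t * Z t) + (if Z t != 0 then lam ^+ 2 * q t else 0).
  have [->|_] := eqVneq (Z t) 0; first by rewrite expr0n /= !mulr0 subrr addr0.
  rewrite /= (_ : _ + _ = q t * (Z t - lam) ^+ 2); last by ring.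
  exact: mulr_ge0 (q_ge0 t) (sqr_ge0 _).
have := sumr_ge0 (index_enum T) (fun t (_ : true) => pointwise t).
rewrite big_split /= sumrB -big_mkcond -!mulr_sumr /=.
set EZ := \sum_t q t * Z t; set EZ2 := \sum_t q t * Z t ^+ 2.
set s := \sum_(t | Z t != 0) q t => ineq.
suff : 0 <= lam * (lam * s - EZ) by rewrite pmulr_rge0 // subr_ge0.
have -> : lam * (lam * s - EZ) = (EZ2 - 2 * lam * EZ + lam ^+ 2 * s) + (lam * EZ - EZ2).
  by ring.
by rewrite addr_ge0 // subr_ge0.
Qed.

Lemma pair_collision_pow_le {R : realType} {p p1 eps : R} {k m : nat} :
  0 < p1 -> p1 <= p -> p <= 1 -> 0 < eps -> (0 < m)%N ->
  Num.ceil ((1 - p1) / p1 * (k%:R / ln (1 + eps))) <= m%:Z ->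
  pair_collision_rate p m ^+ k <= (1 + eps) * (p ^+ 2) ^+ k.
Proof.
(* With rate = p^2 (1 + x): (1 + x)^k <= exp (k x) <= 1 + eps. *)
move=> p1_gt0 p1_le_p p_le1 eps_gt0 m_gt0 m_large.
have p_gt0 : 0 < p := lt_le_trans p1_gt0 p1_le_p.
have m_gt0' : (0 : R) < m%:R by rewrite ltr0n.
set x := (1 - p) / (p * m%:R).
have x_ge0 : 0 <= x by rewrite divr_ge0 ?subr_ge0 // mulr_ge0 // ltW.
have -> : pair_collision_rate p m = p ^+ 2 * (1 + x).
  by rewrite /pair_collision_rate /x; field; rewrite !gt_eqF.
rewrite exprMn mulrC; apply: ler_wpM2r; first by rewrite exprn_ge0 ?sqr_ge0.
have kx_le : k%:R * x <= ln (1 + eps).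
  have ratio_le : (1 - p) / p <= (1 - p1) / p1.
    by rewrite ler_pdivrMr // mulrAC ler_pdivlMr //; nra.
  have : (1 - p1) / p1 * (k%:R / ln (1 + eps)) <= m%:R.
    by apply: (le_trans (ceil_ge _)); rewrite -[m%:R]/(m%:Z%:~R) ler_int.
  rewrite mulrA ler_pdivrMr ?ln_gt0 ?ltrDl // => ratio_k_le.
  have -> : k%:R * x = (1 - p) / p * k%:R / m%:R by rewrite /x; field; rewrite !gt_eqF.
  rewrite ler_pdivrMr // [_ * m%:R]mulrC; apply: le_trans ratio_k_le.
  by rewrite ler_wpM2r.
apply: (@le_trans _ _ (expR x ^+ k)).
  apply: lerXn2r; [by rewrite nnegrE addr_ge0|by rewrite nnegrE expR_ge0|exact: expR_ge1Dx].
by rewrite -expRM_natl -[X in _ <= X](@lnK _ (1 + eps)) ?posrE ?addr_gt0 // ler_expR.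
Qed.

Lemma collision_prob_ge0 {d} {Om : measurableType d} {R : realType} {X Rng : Type}
    {P : probability Om R} {H : Om -> X -> Rng} {x y : X} :
  0 <= collision_prob P H x y.
Proof. exact/fine_ge0/measure_ge0. Qed.

Lemma collision_prob_le1 {d} {Om : measurableType d} {R : realType} {X Rng : Type}
    {P : probability Om R} {H : Om -> X -> Rng} {x y : X} :
  measurable [set w | H w x = H w y] -> collision_prob P H x y <= 1.
Proof.
by move=> mC; rewrite -lee_fin fineK ?fin_num_measure ?probability_le1.
Qed.

Section lsh_scheme.
Context {R : realType} {X Rng : Type} {d : measure_display} {Om : measurableType d}
  {P : probability Om R} {H : Om -> X -> Rng} {x y : X} {k m L : nat}
  {d' : measure_display} {Om' : measurableType d'} {Q : probability Om' R}
  {om : 'I_k -> 'I_m -> Om' -> Om} {ff : 'I_k -> Om' -> {ffun 'I_L -> 'I_m}}.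
Hypotheses (mcoll : measurable [set w | H w x = H w y])
  (om_meas : forall i j, measurable_fun [set: Om'] (om i j))
  (ff_meas : forall i (B : {set {ffun 'I_L -> 'I_m}}),
      measurable (ff i @^-1` [set g | g \in B]))
  (indep : sampled_indep P Q om ff)
  (pw : forall i, pairwise_indep Q (ff i)).

Local Notation p := (collision_prob P H x y).
Local Notation cell := ({ffun 'I_m -> bool} * {ffun 'I_L -> 'I_m})%type.

Definition trace (w : Om') : {ffun 'I_k -> cell} :=
  [ffun i => ([ffun j => `[< H (om i j w) x = H (om i j w) y >]], ff i w)].

Definition hit (t : {ffun 'I_k -> cell}) (l : 'I_L) : bool :=
  [forall i, (t i).1 ((t i).2 l)].

Definition num_hits (t : {ffun 'I_k -> cell}) : R := \sum_l (hit t l)%:R.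

Definition trace_law (t : {ffun 'I_k -> cell}) : R := fine (Q (trace @^-1` [set t])).

Definition ff_law i (f : {ffun 'I_L -> 'I_m}) : R := fine (Q (ff i @^-1` [set f])).

Lemma gfun_eq_hit w l : gfun H om ff l w x = gfun H om ff l w y <-> hit (trace w) l.
Proof.
split=> [eq_g|/forallP hit_l].
  apply/forallP => i; rewrite !ffunE /=; apply/asboolP.
  by have := congr1 (fun g : {ffun 'I_k -> Rng} => g i) eq_g; rewrite !ffunE.
by apply/ffunP => i; have := hit_l i; rewrite !ffunE /= => /asboolP.
Qed.

Lemma num_hits_eq0 t : (num_hits t == 0) = [forall l, ~~ hit t l].
Proof.
rewrite /num_hits -natr_sum pnatr_eq0 sum_nat_eq0.
by apply: eq_forallb => l; rewrite eqb0.
Qed.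

Lemma preimage_set1_ff i f :
  ff i @^-1` [set g | g \in [set f]%SET] = ff i @^-1` [set f].
Proof. by apply/seteqP; split => w /=; rewrite inE => /eqP. Qed.

Lemma measurable_ff1 i f : measurable (ff i @^-1` [set f]).
Proof. by rewrite -preimage_set1_ff. Qed.

Definition collision_event (b : bool) : set Om :=
  if b then [set w | H w x = H w y] else ~` [set w | H w x = H w y].

Lemma trace_preimage1 t : trace @^-1` [set t] =
  (\bigcap_(i in [set: 'I_k]) \bigcap_(j in [set: 'I_m])
      (om i j @^-1` collision_event ((t i).1 j)))
  `&` (\bigcap_(i in [set: 'I_k]) (ff i @^-1` [set g | g \in [set (t i).2]%SET])).
Proof.
apply/seteqP; split => w /=.
  move=> <-; split => i _ /=; rewrite ffunE ?inE //= => j _ /=.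
  by rewrite ffunE /collision_event; case: asboolP.
move=> [coll_ij ff_i]; apply/ffunP => i; rewrite ffunE.
have := ff_i i I; rewrite /= inE => /eqP ->.
case: (t i) (coll_ij i I) => c f /= coll_j; congr pair; apply/ffunP => j.
by rewrite ffunE; have := coll_j j I; rewrite /collision_event; case: (c j) => ?;
  [exact: asboolT | exact: asboolF].
Qed.

Lemma measurable_trace1 t : measurable (trace @^-1` [set t]).
Proof.
rewrite trace_preimage1; apply: measurableI;
  apply: fin_bigcap_measurable; rewrite ?finite_finset // => i _.
  apply: fin_bigcap_measurable; rewrite ?finite_finset // => j _.
  rewrite -[_ @^-1` _]setTI; apply: om_meas => //.
by rewrite /collision_event; case: ifP => _; [|apply: measurableC].
Qed.

Lemma trace_lawE t : trace_law t =
  \prod_i ((\prod_j bernoulli_weight p ((t i).1 j)) * ff_law i (t i).2).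
Proof.
rewrite /trace_law trace_preimage1 indep; last first.
  by move=> i j; rewrite /collision_event; case: ifP => _; [|apply: measurableC].
rewrite -big_split /=; apply: eq_bigr => i _; rewrite preimage_set1_ff.
congr (_ * _); apply: eq_bigr => j _; rewrite /collision_event /bernoulli_weight.
by case: ifP => _ //; rewrite probability_setC // fineB ?fin_num_measure.
Qed.

Lemma trace_law_ge0 t : 0 <= trace_law t.
Proof. exact/fine_ge0/measure_ge0. Qed.

Lemma sum_trace_law : \sum_t trace_law t = 1.
Proof. exact/probability_preimage_sum1/measurable_trace1. Qed.

Lemma sum_ff_law i : \sum_f ff_law i f = 1.
Proof. exact/probability_preimage_sum1/measurable_ff1. Qed.

Lemma ff_law_pairwise i l l' : l != l' -> forall a : 'I_m,
  \sum_(f : {ffun 'I_L -> 'I_m} | (f l == a) && (f l' == a)) ff_law i f = 1 / m%:R ^+ 2.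
Proof.
move=> neq_l a; rewrite -(pw i l l' neq_l a a).
transitivity (fine (Q (ff i @^-1` [set f | (f l == a) && (f l' == a)]))).
  by rewrite (finite_measure_preimage_sum (measurable_ff1 i)).
congr (fine (Q _)); apply/seteqP; split => w /=.
  by case/andP => /eqP -> /eqP ->.
by case=> -> ->; rewrite !eqxx.
Qed.

Lemma expect_hit_pair l l' : (0 < m)%N ->
  \sum_t trace_law t * (hit t l && hit t l')%:R =
  (if l == l' then p else pair_collision_rate p m) ^+ k.
Proof.
move=> m_gt0.
have hit_pairE t : (hit t l && hit t l')%:R =
    \prod_i (((t i).1 ((t i).2 l) && (t i).1 ((t i).2 l'))%:R : R).
  rewrite natr_forall; congr ((nat_of_bool _)%:R).
  apply/andP/forallP => [[/forallP hl /forallP hl'] i|hll']; first by rewrite hl hl'.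
  by split; apply/forallP => i; have /andP[] := hll' i.
under eq_bigr do rewrite trace_lawE hit_pairE.
rewrite (@sum_ffun_prodM _ _ _
  (fun i (u : cell) => (\prod_j bernoulli_weight p (u.1 j)) * ff_law i u.2)
  (fun i (u : cell) => (u.1 (u.2 l) && u.1 (u.2 l'))%:R)).
rewrite -[k in RHS]card_ord -prodr_const; apply: eq_bigr => i _.
rewrite -(pair_bigA _ (fun (c : {ffun 'I_m -> bool}) (f : {ffun 'I_L -> 'I_m}) =>
  (\prod_j bernoulli_weight p (c j)) * ff_law i f * (c (f l) && c (f l'))%:R)) /=.
rewrite exchange_big /=.
transitivity (\sum_f ff_law i f * p ^+ (f l != f l').+1).
  apply: eq_bigr => f _; rewrite -cards2 -(sum_bernoulli_all _ _ [set f l; f l']%SET) mulr_sumr.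
  by apply: eq_bigr => c _; rewrite prod_set2_natr mulrAC mulrC.
have [<-|neq_l] := eqVneq l l'.
  by under eq_bigr do rewrite eqxx expr1; rewrite -mulr_suml sum_ff_law mul1r.
by apply: sum_pairwise_uniform_pow => //; [exact: sum_ff_law | exact: ff_law_pairwise].
Qed.

Lemma expect_num_hits : (0 < m)%N ->
  \sum_t trace_law t * num_hits t = L%:R * p ^+ k.
Proof.
move=> m_gt0; under eq_bigr do rewrite mulr_sumr.
rewrite exchange_big /= (eq_bigr (fun=> p ^+ k)) ?sumr_const ?card_ord ?mulr_natl //.
move=> l _; have := expect_hit_pair l l m_gt0; rewrite eqxx => <-.
by apply: eq_bigr => t _; rewrite andbb.
Qed.

Lemma expect_num_hits_sqr : (0 < m)%N ->
  \sum_t trace_law t * num_hits t ^+ 2 <=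
  L%:R * p ^+ k + L%:R ^+ 2 * pair_collision_rate p m ^+ k.
Proof.
move=> m_gt0; set V := pair_collision_rate p m.
have V_ge0 : 0 <= V.
  have p_ge0 : 0 <= p := collision_prob_ge0.
  rewrite addr_ge0 ?sqr_ge0 ?divr_ge0 // subr_ge0 expr2 ler_piMr //.
  exact: collision_prob_le1.
have sqrE t : num_hits t ^+ 2 = \sum_l \sum_l' (hit t l && hit t l')%:R.
  rewrite expr2 /num_hits mulr_suml; apply: eq_bigr => l _.
  by rewrite mulr_sumr; apply: eq_bigr => l' _; rewrite -natrM mulnb.
have -> : \sum_t trace_law t * num_hits t ^+ 2 =
    \sum_l \sum_l' \sum_t trace_law t * (hit t l && hit t l')%:R.
  under eq_bigr do rewrite sqrE mulr_sumr; rewrite exchange_big /=.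
  by apply: eq_bigr => l _; under eq_bigr do rewrite mulr_sumr; rewrite exchange_big.
have -> : L%:R * p ^+ k + L%:R ^+ 2 * V ^+ k =
    \sum_(l < L) \sum_(l' < L) ((l == l')%:R * p ^+ k + V ^+ k).
  have diag l : \sum_(l' < L) (l == l')%:R = 1 :> R.
    by rewrite (bigD1 l) //= eqxx big1 ?addr0 // => l' neq_l; rewrite eq_sym (negbTE neq_l).
  under eq_bigr do rewrite big_split /= -mulr_suml diag mul1r.
  by rewrite big_split /= !sumr_const !card_ord; ring.
apply: ler_sum => l _; apply: ler_sum => l' _; rewrite expect_hit_pair //.
have [_|_] := eqVneq l l'; first by rewrite mul1r lerDl exprn_ge0.
by rewrite mul0r add0r.
Qed.

Lemma no_hit_prob :
  Q [set w | ~ (exists l : 'I_L, gfun H om ff l w x = gfun H om ff l w y)]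
  = (1 - \sum_(t | num_hits t != 0) trace_law t)%:E.
Proof.
have -> : [set w | ~ (exists l, gfun H om ff l w x = gfun H om ff l w y)] =
    trace @^-1` [set t | num_hits t == 0].
  apply/seteqP; split => w /=.
    move=> no_hit; rewrite num_hits_eq0; apply/forallP => l.
    by apply/negP => /gfun_eq_hit hit_l; apply: no_hit; exists l.
  by rewrite num_hits_eq0 => /forallP no_hit [l /gfun_eq_hit]; apply/negP.
rewrite (finite_measure_preimage_sum measurable_trace1 Q (fun t => num_hits t == 0)).
by rewrite -sum_trace_law [in RHS](bigID (fun t => num_hits t == 0)) /= addrK.
Qed.

End lsh_scheme.

Theorem lemma10
  (R : realType) (X Rng : Type) (dist : X -> X -> R)
  (d : measure_display) (Om : measurableType d) (P : probability Om R)
  (H : Om -> X -> Rng)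
  (r1 r2 p1 p2 : R)
  (Hr : r1 < r2)
  (Hmeas : forall x y : X, measurable [set w | H w x = H w y])
  (Hsens : sensitive dist P H r1 r2 p1 p2)
  (Hp1 : 0 < p1) (Hp1' : p1 <= 1)
  (k L : nat) (Hk : (0 < k)%N) (HL : (0 < L)%N)
  (eps : R) (Heps : 0 < eps)
  (m : nat) (Hm1 : (1 <= m)%N)
  (Hm : Num.ceil ((1 - p1) / p1 * (k%:R / ln (1 + eps))) <= m%:Z)
  (d' : measure_display) (Om' : measurableType d') (Q : probability Om' R)
  (om : 'I_k -> 'I_m -> Om' -> Om)
  (ff : 'I_k -> Om' -> {ffun 'I_L -> 'I_m})
  (Hom_meas : forall i j, measurable_fun [set: Om'] (om i j))
  (Hff_meas : forall i (B : {set {ffun 'I_L -> 'I_m}}),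
      measurable (ff i @^-1` [set g | g \in B]))
  (Hindep : sampled_indep P Q om ff)
  (Hpw : forall i, pairwise_indep Q (ff i)) :
  forall x y : X, dist x y <= r1 ->
    let p := collision_prob P H x y in
    let mu := L%:R * p ^+ k in
    (Q [set w | ~ (exists l : 'I_L, gfun H om ff l w x = gfun H om ff l w y)]
      <= ((1 + eps * mu) / (1 + (1 + eps) * mu))%:E)%E.
Proof.
move=> x y dxy; cbv zeta.
have mcoll := Hmeas x y.
have p1_le_p : p1 <= collision_prob P H x y := (Hsens x y).1 dxy.
set p := collision_prob P H x y in p1_le_p *; set mu := L%:R * p ^+ k.
have mu_ge0 : 0 <= mu by rewrite mulr_ge0 ?exprn_ge0 ?collision_prob_ge0.
set lam := 1 + (1 + eps) * mu.
have lam_gt0 : 0 < lam by rewrite ltr_wpDr // mulr_ge0 // addr_ge0 // ltW.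
have EZ := expect_num_hits mcoll Hff_meas Hindep Hpw Hm1.
have EZ2 := expect_num_hits_sqr mcoll Hff_meas Hindep Hpw Hm1.
rewrite -/p -/mu in EZ EZ2.
have EZ2_le : mu + L%:R ^+ 2 * pair_collision_rate p m ^+ k <= lam * mu.
  have := pair_collision_pow_le Hp1 p1_le_p (collision_prob_le1 mcoll) Heps Hm1 Hm.
  have -> : lam * mu = mu + L%:R ^+ 2 * ((1 + eps) * (p ^+ 2) ^+ k).
    by rewrite /lam /mu exprAC; ring.
  by move=> pair_le; rewrite lerD2l ler_wpM2l ?exprn_ge0 ?ler0n.
rewrite -{2}EZ in EZ2_le.
have := second_moment_lower trace_law_ge0 lam_gt0 (le_trans EZ2 EZ2_le).
rewrite EZ no_hit_prob // lee_fin ler_pdivlMr // mulrBl mul1r mulrC.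
rewrite /lam in lam_gt0 *; lra.
Qed.
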